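(* Let $N\ge n\ge 1$ be integers, let $l_1,\dots,l_N>0$, and let $U=(u_{ij})_{i,j=1}^{2N}$ be a unitary $2N\times 2N$ matrix. Consider the quantum graph $\Gamma_0$ consisting of a single vertex and $N$ finite edges (loops) of lengths $l_1,\dots,l_N$, each emanating from and ending at this vertex; its Hilbert space is $\bigoplus_{j=1}^N L^2([0,l_j])$, and the Hamiltonian $H=H_U$ acts as $-\mathrm{d}^2/\mathrm{d}x^2$ on each edge, with domain consisting of all $(f_1,\dots,f_N)\in\bigoplus_j W^{2,2}([0,l_j])$ satisfying $$(U-I)\Psi+i(U+I)\Psi'=0,$$ where $\Psi=(f_1(0),f_1(l_1),f_2(0),f_2(l_2),\dots,f_N(0),f_N(l_N))^T$ and $\Psi'=(f_1'(0),-f_1'(l_1),\dots,f_N'(0),-f_N'(l_N))^T$. Suppose there is $l_0>0$ such that $l_1,\dots,l_n$ are integer multiples of $l_0$. Let $M_{\mathrm{even}}$ be the $2N\times 2n$ matrix formed by the first $2n$ columns of $U$, except that for each $j\in\{1,\dots,n\}$ the entries in positions $(2j-1,2j)$ and $(2j,2j-1)$ are replaced by $u_{2j-1,2j}-1$ and $u_{2j,2j-1}-1$, respectively. If $\mathrm{rank}\,M_{\mathrm{even}}<2n$, then the spectrum of $H_U$ contains the eigenvalues $\epsilon=4m^2\pi^2/l_0^2$, $m\in\mathbb{N}$, and the multiplicity of these eigenvalues is at least $2n-\mathrm{rank}\,M_{\mathrm{even}}$.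
   Context: The boundary condition at the vertex is the general self-adjoint vertex coupling; $\Psi$ collects the boundary values at both ends of every edge and $\Psi'$ the corresponding outward derivatives, ordered so that entries $2j-1,2j$ refer to the two ends of the $j$-th edge. *)

From HB Require Import structures.
From mathcomp Require Import all_boot all_order all_algebra.
From mathcomp Require Import all_classical all_reals all_analysis.
From mathcomp.real_closed Require Import complex.
Set Implicit Arguments. Unset Strict Implicit. Unset Printing Implicit Defensive.
Import Order.TTheory GRing.Theory Num.Theory.
Local Open Scope ring_scope.

Section QG.
Variable R : realType.
Local Notation C := (R[i]).

Definition reF (f : R -> C) : R -> R := fun x => complex.Re (f x).
Definition imF (f : R -> C) : R -> R := fun x => complex.Im (f x).

Definition cderive (f : R -> C) : R -> C :=
  fun x => Complex (derive1 (reF f) x) (derive1 (imF f) x).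

Definition twice_derivable (f : R -> C) : Prop :=
  forall x : R,
    [/\ derivable (reF f) x 1, derivable (imF f) x 1,
        derivable (derive1 (reF f)) x 1 & derivable (derive1 (imF f)) x 1].

Definition unitary_mx (m : nat) (U : 'M[C]_m) : Prop :=
  U *m (map_mx (@conjc R) U)^T = 1%:M.

(* boundary value vector Psi (0-based: entry 2j is f_j(0), entry 2j+1 is f_j(l_j)) *)
Definition Psi (N : nat) (l : 'I_N -> R) (f : 'I_N -> R -> C) : 'cV[C]_(2 * N) :=
  \col_(i < 2 * N)
    match insub (i./2) : option 'I_N with
    | Some j => if odd i then f j (l j) else f j 0
    | None => 0
    end.

(* outward derivative vector Psi' : entry 2j is f_j'(0), entry 2j+1 is -f_j'(l_j) *)
Definition Psi' (N : nat) (l : 'I_N -> R) (f : 'I_N -> R -> C) : 'cV[C]_(2 * N) :=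
  \col_(i < 2 * N)
    match insub (i./2) : option 'I_N with
    | Some j => if odd i then - cderive (f j) (l j) else cderive (f j) 0
    | None => 0
    end.

(* f = (f_1,...,f_N) is an eigenfunction (possibly zero) of H_U with eigenvalue eps:
   each f_j is C^2-regular, solves -f_j'' = eps f_j on [0, l_j], and the
   vertex condition (U - I) Psi + i (U + I) Psi' = 0 holds. *)
Definition is_eigvec (N : nat) (U : 'M[C]_(2 * N)) (l : 'I_N -> R) (eps : R)
    (f : 'I_N -> R -> C) : Prop :=
  [/\ forall j, twice_derivable (f j),
      forall j x, 0 <= x <= l j ->
        - cderive (cderive (f j)) x = (eps%:C)%C * f j x
    & (U - 1%:M) *m Psi l f + ('i)%C *: ((U + 1%:M) *m Psi' l f) = 0].

(* linear independence of a finite family of elements of the Hilbert space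
   (functions are compared on their edges [0, l_j] only) *)
Definition lin_indep (N k : nat) (l : 'I_N -> R) (F : 'I_k -> 'I_N -> R -> C) : Prop :=
  forall c : 'I_k -> C,
    (forall j x, 0 <= x <= l j -> \sum_(r < k) c r * F r j x = 0) ->
    forall r, c r = 0.

End QG.

Lemma leq_double_mul (n N : nat) : (n <= N)%N -> (2 * n <= 2 * N)%N.
Proof. by move=> h; rewrite leq_mul2l h orbT. Qed.

(* M_even: first 2n columns of U, with entries (2j-1,2j) and (2j,2j-1) (1-based,
   j = 1..n) decreased by 1.  0-based: column k odd & row k-1, or column k even & row k+1. *)
Definition M_even (R : realType) (N n : nat) (h : (n <= N)%N) (U : 'M[R[i]]_(2 * N))
  : 'M[R[i]]_(2 * N, 2 * n) :=
  \matrix_(i < 2 * N, k < 2 * n)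
    (U i (widen_ord (leq_double_mul h) k)
     - (if (odd k && (i.+1 == k)) || (~~ odd k && (i == k.+1 :> nat)) then 1 else 0)).

From HB Require Import structures.
From mathcomp Require Import all_boot all_order all_algebra.
From mathcomp Require Import all_classical all_reals all_analysis.
From mathcomp.real_closed Require Import complex.
From mathcomp Require Import ring lra.
Set Implicit Arguments. Unset Strict Implicit. Unset Printing Implicit Defensive.
Import Order.TTheory GRing.Theory Num.Theory.
Local Open Scope ring_scope.

(* For eps = k^2 with k = 2 pi m / l0, every f = a cos(kx) + b sin(kx) solves
   -f'' = eps f, and on the edges j < n, where k l_j is in 2 pi Z, f and f' take
   the same values at both ends; the remaining edges carry f = 0.  Then
   Psi + i Psi' has the entries a_j + i k b_j and a_j - i k b_j at the two ends
   of edge j, and Psi - i Psi' is the same vector with each such pair swapped.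
   As (U - I) Psi + i (U + I) Psi' = U (Psi + i Psi') - (Psi - i Psi'), the
   vertex condition says precisely that these 2n entries form a vector in the
   kernel of M_even.  A basis of that kernel thus yields 2n - rank M_even
   eigenfunctions, which are independent because a_j and b_j are the values at
   0 and at the quarter period pi / (2k) <= l_j. *)

Section Waves.
Variable R : realType.
Local Notation C := (R[i]).

Lemma is_derive_scale (f : R -> R) (k x df : R) :
  is_derive (k * x) 1 f df -> is_derive x 1 (fun y => f (k * y)) (df * k).
Proof.
move=> f_der.
have scale_der : derivable (fun y : R => k * y) x 1.
  by apply: derivableM => //; apply: derivable_cst.
have f_derivable : derivable f (k * x) 1 by apply: ex_derive.
have comp_der : derivable (f \o (fun y => k * y)) x 1.
  apply/derivable1_diffP; apply: differentiable_comp; exact/derivable1_diffP.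
split; first exact: comp_der.
rewrite -derive1E (derive1_comp scale_der f_derivable) derive1E derive_val.
congr (_ * _); rewrite derive1E (_ : (fun y : R => k * y) = k *: (@id R)) //.
by rewrite deriveZ ?derive_id /GRing.scale /= ?mulr1 //; exact: derivable_id.
Qed.

Definition rwave (k p q x : R) : R := p * cos (k * x) + q * sin (k * x).

Lemma is_derive_rwave (k p q x : R) :
  is_derive x 1 (rwave k p q) (rwave k (k * q) (- (k * p)) x).
Proof.
have cos_der : is_derive x 1 (fun y => cos (k * y)) (- sin (k * x) * k).
  exact: is_derive_scale.
have sin_der : is_derive x 1 (fun y => sin (k * y)) (cos (k * x) * k).
  exact: is_derive_scale.
apply: is_derive_eq (is_deriveD (is_deriveZ p cos_der) (is_deriveZ q sin_der)) _.
rewrite /rwave /GRing.scale /=; lra.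
Qed.

Local Open Scope complex_scope.

Definition wave (k : R) (a b : C) (x : R) : C :=
  a * (cos (k * x))%:C + b * (sin (k * x))%:C.

Lemma reF_wave k a b : reF (wave k a b) = rwave k (complex.Re a) (complex.Re b).
Proof.
by apply/funext => x; case: a b => [a1 a2] [b1 b2]; rewrite /reF /= !mulr0 !subr0.
Qed.

Lemma imF_wave k a b : imF (wave k a b) = rwave k (complex.Im a) (complex.Im b).
Proof.
by apply/funext => x; case: a b => [a1 a2] [b1 b2]; rewrite /imF /= !mulr0 !add0r.
Qed.

Lemma cderive_wave k a b : cderive (wave k a b) = wave k (k%:C * b) (- (k%:C * a)).
Proof.
apply/funext => x; rewrite /cderive reF_wave imF_wave !derive1E.
have [_ ->] := is_derive_rwave k (complex.Re a) (complex.Re b) x.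
have [_ ->] := is_derive_rwave k (complex.Im a) (complex.Im b) x.
case: a b => [a1 a2] [b1 b2]; rewrite /rwave /=.
congr (_ +i* _); ring.
Qed.

Lemma wave_twice_derivable k a b : twice_derivable (wave k a b).
Proof.
have rwave_derivable p q x : derivable (rwave k p q) x 1.
  by case: (is_derive_rwave k p q x).
move=> x; split.
- by rewrite reF_wave.
- by rewrite imF_wave.
- by rewrite -[derive1 _]/(reF (cderive (wave k a b))) cderive_wave reF_wave.
- by rewrite -[derive1 _]/(imF (cderive (wave k a b))) cderive_wave imF_wave.
Qed.

Lemma wave_eigen k a b x :
  - cderive (cderive (wave k a b)) x = (k ^+ 2)%:C * wave k a b x.
Proof.
rewrite !cderive_wave; case: a b => [a1 a2] [b1 b2]; rewrite /wave /=.
congr (_ +i* _); ring.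
Qed.

Lemma wave00 k x : wave k 0 0 x = 0.
Proof. by rewrite /wave !mul0r addr0. Qed.

Lemma wave_period k a b x : cos (k * x) = 1 -> sin (k * x) = 0 ->
  wave k a b x = a /\ cderive (wave k a b) x = k%:C * b.
Proof.
by move=> cos1 sin0; rewrite cderive_wave /wave cos1 sin0 !mulr0 !addr0 !mulr1.
Qed.

Lemma wave_at0 k a b : wave k a b 0 = a.
Proof. by rewrite /wave mulr0 cos0 sin0 mulr0 addr0 mulr1. Qed.

Lemma wave_quarter k a b : k != 0 -> wave k a b (pi / 2 / k) = b.
Proof.
move=> k_neq0; rewrite /wave (_ : k * (pi / 2 / k) = pi / 2); last by field.
by rewrite cos_pihalf sin_pihalf mulr0 add0r mulr1.
Qed.

Lemma cos_sin_2piz (z : int) :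
  cos (pi *+ 2 * z%:~R) = 1 :> R /\ sin (pi *+ 2 * z%:~R) = 0 :> R.
Proof.
have nat_case (p : nat) : cos (pi *+ 2 * p%:R) = 1 :> R /\ sin (pi *+ 2 * p%:R) = 0 :> R.
  have := periodicn (@cosD2pi R) p 0; have := periodicn (@sinD2pi R) p 0.
  by rewrite !add0r cos0 sin0 mulr_natr => -> ->.
case: z => p; first exact: nat_case.
by rewrite NegzE mulrNz mulrN cosN sinN; have [-> ->] := nat_case p.+1; rewrite oppr0.
Qed.

End Waves.

(* the index of the other end of the same edge *)
Definition mate (i : nat) : nat := if odd i then i.-1 else i.+1.

Lemma mate_double (b : bool) (j : nat) : mate (b + j.*2) = (~~ b + j.*2)%N.
Proof. by case: b; rewrite /mate /= ?odd_double. Qed.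

Lemma M_even_shiftE (i k : nat) :
  ((odd k && (i.+1 == k)) || (~~ odd k && (i == k.+1 :> nat))) = (k == mate i).
Proof.
rewrite /mate; apply/idP/eqP.
- case/orP => /andP[odd_k /eqP k_eq].
    by move: odd_k; rewrite -k_eq /= => /negbTE ->.
  by move: odd_k; rewrite k_eq /= => ->.
- move=> ->; case: (boolP (odd i)) => odd_i.
    by apply/orP; right; case: i odd_i => [//|i] /= ->; rewrite eqxx.
  by apply/orP; left; rewrite /= odd_i eqxx.
Qed.

Lemma kernel_basis (F : fieldType) (m p : nat) (M : 'M[F]_(m, p)) :
  exists B : 'M[F]_(p - \rank M, p), row_free B /\ B *m M^T = 0.
Proof.
rewrite -(mxrank_tr M) -mxrank_ker.
exists (row_base (kermx M^T)); split; first exact: row_base_free.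
have /submxP[D ->] : (row_base (kermx M^T) <= kermx M^T)%MS by rewrite eq_row_base.
by rewrite -mulmxA mulmx_ker mulmx0.
Qed.

Section VertexCondition.
Variable R : realType.
Local Notation C := (R[i]).
Local Open Scope complex_scope.

Definition padded (p : nat) (w : 'rV[C]_p) (i : nat) : C :=
  if insub i is Some k then w 0 k else 0.

Lemma padded_ord p (w : 'rV[C]_p) (k : 'I_p) : padded w k = w 0 k.
Proof. by rewrite /padded valK. Qed.

Lemma padded_out p (w : 'rV[C]_p) (i : nat) : (p <= i)%N -> padded w i = 0.
Proof. by move=> p_le_i; rewrite /padded insubF // ltnNge p_le_i. Qed.

Variables (N n : nat) (hnN : (n <= N)%N) (U : 'M[C]_(2 * N)).

Lemma M_even_kerE (w : 'rV[C]_(2 * n)) (i : 'I_(2 * N)) :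
  (w *m (M_even hnN U)^T) 0 i =
  \sum_(k < 2 * N) U i k * padded w k - padded w (mate i).
Proof.
have sum_U : \sum_(k < 2 * N) U i k * padded w k
             = \sum_(k < 2 * n) U i (widen_ord (leq_double_mul hnN) k) * w 0 k.
  rewrite (bigID (fun k : 'I_(2 * N) => (k < 2 * n)%N)) /= [X in _ + X]big1 => [|k].
    rewrite addr0 (big_ord_narrow_cond (P := xpredT) (leq_double_mul hnN)).
    by apply: eq_bigr => k _; rewrite padded_ord.
  by rewrite -leqNgt => /padded_out ->; rewrite mulr0.
have sum_mate : padded w (mate i) = \sum_(k < 2 * n) (if k == mate i :> nat then w 0 k else 0).
  rewrite -big_mkcond (eq_bigr (fun k : 'I_(2 * n) => padded w k)) => [|k _]; last first.
    by rewrite padded_ord.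
  by rewrite big_ord1_eq; case: ltnP => // /padded_out.
rewrite mxE sum_U sum_mate -sumrB; apply: eq_bigr => k _.
rewrite !mxE -M_even_shiftE mulrC mulrBl.
by case: ifP; rewrite ?mul1r ?mul0r.
Qed.

Lemma vertex_cond_of_kernel (w : 'rV[C]_(2 * n)) (P Q : 'cV[C]_(2 * N)) :
  w *m (M_even hnN U)^T = 0 ->
  (forall i : 'I_(2 * N), P i 0 + 'i * Q i 0 = padded w i) ->
  (forall i : 'I_(2 * N), P i 0 - 'i * Q i 0 = padded w (mate i)) ->
  (U - 1%:M) *m P + 'i *: ((U + 1%:M) *m Q) = 0.
Proof.
move=> w_ker PQ_plus PQ_minus.
have -> : (U - 1%:M) *m P + 'i *: ((U + 1%:M) *m Q) = U *m (P + 'i *: Q) - (P - 'i *: Q).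
  rewrite mulmxBl mulmxDl !mul1mx scalerDr scalemxAr mulmxDr.
  by rewrite opprB addrACA (addrC (- P)).
apply/matrixP => i j; rewrite (ord1 j) !mxE.
under eq_bigr => k _ do rewrite !mxE PQ_plus.
by rewrite PQ_minus -M_even_kerE w_ker mxE.
Qed.

End VertexCondition.

Section Modes.
Variable R : realType.
Local Notation C := (R[i]).
Local Open Scope complex_scope.
Variables (N n : nat) (hnN : (n <= N)%N) (U : 'M[C]_(2 * N)) (l : 'I_N -> R) (k : R).
Hypothesis k_gt0 : 0 < k.
Hypothesis l_period : forall j : 'I_N, (j < n)%N -> cos (k * l j) = 1 /\ sin (k * l j) = 0.

Definition cos_coef (w : 'rV[C]_(2 * n)) (j : nat) : C :=
  (padded w j.*2 + padded w j.*2.+1) / 2.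

Definition sin_coef (w : 'rV[C]_(2 * n)) (j : nat) : C :=
  (padded w j.*2 - padded w j.*2.+1) / (2 * 'i * k%:C).

Definition mode (w : 'rV[C]_(2 * n)) (j : 'I_N) : R -> C :=
  wave k (cos_coef w j) (sin_coef w j).

Lemma padded_split w (b : bool) (j : nat) :
  padded w (b + j.*2) = cos_coef w j + (-1) ^+ b * ('i * (k%:C * sin_coef w j)).
Proof.
have i_neq0 : 'i != 0 :> C by apply/eqP => /(congr1 (@complex.Im R)) /= /eqP; rewrite oner_eq0.
have k_neq0 : k%:C != 0 :> C by apply/eqP => -[/eqP]; rewrite gt_eqF.
rewrite /cos_coef /sin_coef; case: b; rewrite /= ?add1n ?add0n ?expr1 ?expr0.
  by field; rewrite i_neq0 k_neq0.
by field; rewrite i_neq0 k_neq0.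
Qed.

Lemma mode_boundary w (j : 'I_N) (x : R) : x = 0 \/ x = l j ->
  mode w j x = cos_coef w j /\ cderive (mode w j) x = k%:C * sin_coef w j.
Proof.
move=> x_end; case: (ltnP j n) => [j_lt_n | n_le_j].
  have [cos1 sin0] : cos (k * x) = 1 /\ sin (k * x) = 0.
    by case: x_end => ->; [rewrite mulr0 cos0 sin0 | exact: l_period].
  exact: wave_period.
have n2_le_j2 : (2 * n <= j.*2)%N by rewrite -mul2n leq_mul2l n_le_j.
rewrite /mode cderive_wave; have [-> ->] : cos_coef w j = 0 /\ sin_coef w j = 0.
  by rewrite /cos_coef /sin_coef !padded_out ?(leqW n2_le_j2) // addr0 subr0 !mul0r.
by rewrite !mulr0 oppr0 !wave00.
Qed.

Lemma Psi_mode_entries w (i : 'I_(2 * N)) :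
  Psi l (mode w) i 0 = cos_coef w i./2 /\
  Psi' l (mode w) i 0 = (-1) ^+ odd i * (k%:C * sin_coef w i./2).
Proof.
rewrite !mxE; case: insubP => [j _ <- | ]; last by rewrite ltn_half_double -mul2n ltn_ord.
have [at0 der0] := @mode_boundary w j 0 (or_introl erefl).
have [atl derl] := @mode_boundary w j (l j) (or_intror erefl).
by case: (odd i); rewrite ?at0 ?der0 ?atl ?derl ?expr1 ?expr0 ?mulN1r ?mul1r.
Qed.

Lemma mode_eigvec w : w *m (M_even hnN U)^T = 0 -> is_eigvec U l (k ^+ 2) (mode w).
Proof.
move=> w_ker; split=> [j | j x _ | ]; first exact: wave_twice_derivable.
  exact: wave_eigen.
have i_split (i : 'I_(2 * N)) : (i : nat) = (odd i + i./2.*2)%N by rewrite odd_double_half.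
apply: (vertex_cond_of_kernel w_ker) => i; have [-> ->] := Psi_mode_entries w i.
  by rewrite [in RHS]i_split padded_split mulrCA.
rewrite [in RHS]i_split mate_double padded_split.
by case: (odd i); rewrite /= ?expr1 ?expr0 ?mulN1r ?mul1r ?opprK; ring.
Qed.

Lemma lin_indep_modes (p : nat) (B : 'M[C]_(p, 2 * n)) :
  row_free B -> (forall j : 'I_N, (j < n)%N -> pi / 2 / k <= l j) ->
  lin_indep l (fun r => mode (row r B)).
Proof.
move=> B_free quarter_le c c_sum r.
suff row_c0 : \row_q c q *m B = 0.
  have /matrixP/(_ 0 r) := row_free_inj B_free (etrans row_c0 (esym (mul0mx _ B))).
  by rewrite !mxE.
apply/rowP => i; rewrite !mxE.
have j_lt_n : (i./2 < n)%N by rewrite ltn_half_double -mul2n ltn_ord.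
pose j := Ordinal (leq_trans j_lt_n hnN).
have quarter_ge0 : 0 <= pi / 2 / k by rewrite !divr_ge0 // ?pi_ge0 // ltW.
have cos_sum : \sum_q c q * cos_coef (row q B) j = 0.
  rewrite -[RHS](c_sum j 0) ?lexx ?(le_trans quarter_ge0 (quarter_le j j_lt_n)) //.
  by apply: eq_bigr => q _; rewrite /mode wave_at0.
have sin_sum : \sum_q c q * sin_coef (row q B) j = 0.
  rewrite -[RHS](c_sum j (pi / 2 / k)) ?quarter_ge0 ?quarter_le //.
  by apply: eq_bigr => q _; rewrite /mode wave_quarter ?gt_eqF.
have i_split : (i : nat) = (odd i + j.*2)%N by rewrite odd_double_half.
pose s : C := (-1) ^+ odd i * ('i * k%:C).
have B_split q : B q i = cos_coef (row q B) j + s * sin_coef (row q B) j.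
  rewrite (_ : B q i = padded (row q B) i); last by rewrite padded_ord mxE.
  by rewrite i_split padded_split /s -!mulrA.
rewrite (eq_bigr (fun q => c q * cos_coef (row q B) j + s * (c q * sin_coef (row q B) j))).
  by rewrite big_split /= -mulr_sumr cos_sum sin_sum mulr0 addr0.
by move=> q _; rewrite mxE B_split mulrDr [c q * (s * _)]mulrCA.
Qed.

End Modes.

Lemma lin_indep_nonzero (R : realType) (N p : nat) (l : 'I_N -> R)
    (F : 'I_p -> 'I_N -> R -> R[i]) :
  lin_indep l F -> forall r, exists j x, 0 <= x <= l j /\ F r j x != 0.
Proof.
move=> F_indep r; apply: contrapT => F_r0.
have only_r_vanishes j x : 0 <= x <= l j -> \sum_q (q == r)%:R * F q j x = 0.
  move=> x_in; rewrite (bigD1 r) //= eqxx mul1r big1 => [|q /negbTE ->]; last by rewrite mul0r.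
  by rewrite addr0; apply/eqP; apply: contraT => F_rjx; case: F_r0; exists j, x.
by have /eqP := F_indep _ only_r_vanishes r; rewrite eqxx oner_eq0.
Qed.

Section Wavenumber.
Variables (R : realType) (l0 : R) (m : nat).
Hypotheses (l0_gt0 : 0 < l0) (m_gt0 : (0 < m)%N).

Definition wavenumber : R := pi *+ 2 * m%:R / l0.

Lemma wavenumber_gt0 : 0 < wavenumber.
Proof. by rewrite divr_gt0 // mulr_gt0 ?ltr0n // mulrn_wgt0 ?pi_gt0. Qed.

Lemma sqr_wavenumber : wavenumber ^+ 2 = 4 * m%:R ^+ 2 * pi ^+ 2 / l0 ^+ 2.
Proof. by rewrite /wavenumber mulr2n; field; rewrite gt_eqF. Qed.

Lemma wavenumber_period (z : int) :
  cos (wavenumber * (z%:~R * l0)) = 1 /\ sin (wavenumber * (z%:~R * l0)) = 0.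
Proof.
rewrite (_ : wavenumber * _ = pi *+ 2 * (m%:Z * z)%:~R); first exact: cos_sin_2piz.
by rewrite intrM /wavenumber; field; rewrite gt_eqF.
Qed.

Lemma quarter_wavelength_le (z : int) :
  0 < z%:~R * l0 -> pi / 2 / wavenumber <= z%:~R * l0.
Proof.
rewrite pmulr_lgt0 // => z_gt0.
have m_ge1 : 1 <= m%:R :> R by rewrite ler1n.
have z_ge1 : 1 <= z%:~R :> R by rewrite ler1z -gtz0_ge1 -(ltr0z R).
have -> : pi / 2 / wavenumber = l0 / (4 * m%:R).
  have := pi_gt0 R; rewrite /wavenumber; move: pi => p p_gt0.
  by field; rewrite ?gt_eqF ?ltr0n.
have zm_ge1 : 1 <= z%:~R * (4 * m%:R) :> R by nra.
by rewrite ler_pdivrMr ?mulr_gt0 ?ltr0n // mulrAC ler_peMl // ltW.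
Qed.

End Wavenumber.

Theorem theorem1 (R : realType) (N n : nat) (hn1 : (1 <= n)%N) (hnN : (n <= N)%N)
    (l : 'I_N -> R) (hl : forall j, 0 < l j)
    (U : 'M[R[i]]_(2 * N)) (hU : unitary_mx U)
    (l0 : R) (hl0 : 0 < l0)
    (hmult : forall j : 'I_N, (j < n)%N -> exists k : int, l j = k%:~R * l0)
    (hrank : (\rank (M_even hnN U) < 2 * n)%N) :
  forall m : nat, (0 < m)%N ->
    let eps := 4 * (m%:R) ^+ 2 * pi ^+ 2 / l0 ^+ 2 in
    (exists f : 'I_N -> R -> R[i],
        is_eigvec U l eps f /\ exists j x, 0 <= x <= l j /\ f j x != 0)
    /\
    (exists F : 'I_(2 * n - \rank (M_even hnN U)) -> 'I_N -> R -> R[i],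
        (forall r, is_eigvec U l eps (F r)) /\ lin_indep l F).
Proof.
move=> m m_gt0 eps.
have k_gt0 := wavenumber_gt0 hl0 m_gt0.
have -> : eps = wavenumber l0 m ^+ 2 by rewrite sqr_wavenumber.
have l_period (j : 'I_N) : (j < n)%N ->
    cos (wavenumber l0 m * l j) = 1 /\ sin (wavenumber l0 m * l j) = 0.
  by case/hmult=> z ->; apply: wavenumber_period.
have l_quarter (j : 'I_N) : (j < n)%N -> pi / 2 / wavenumber l0 m <= l j.
  by case/hmult=> z l_j; rewrite l_j quarter_wavelength_le // -l_j.
have [B [B_free B_ker]] := kernel_basis (M_even hnN U).
pose F r := @mode R N n (wavenumber l0 m) (row r B).
have F_eigvec r : is_eigvec U l (wavenumber l0 m ^+ 2) (F r).
  by apply: (mode_eigvec k_gt0 l_period); rewrite -row_mul B_ker row0.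
have F_indep : lin_indep l F := lin_indep_modes hnN k_gt0 B_free l_quarter.
split; last by exists F.
have r0 : 'I_(2 * n - \rank (M_even hnN U)) by exists 0%N; rewrite subn_gt0.
exists (F r0); split; [exact: F_eigvec | exact: lin_indep_nonzero].
Qed.
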